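(* Let $\kappa$ be an infinite cardinal. The sublattice $B=\{(A,\,A\cap C,\,C) : A,C\in\mathcal{F}(\kappa),\ A\sim C\}$ of $S$ is not the range of any Banaschewski function on $S$.
   Context: $\mathcal{F}(\kappa)$ is the Boolean lattice of subsets $X\subseteq\kappa$ that are finite or cofinite. For $A,C\in\mathcal{F}(\kappa)$, $A\sim C$ means that either both $A,C$ are finite or both $\kappa\setminus A,\kappa\setminus C$ are finite. Let $\mu(A,B,C)=(A\cap B)\cup(A\cap C)\cup(B\cap C)$; a triple is balanced if $A\cap B=A\cap C=B\cap C$. $S$ is the set of balanced triples $(A,B,C)\in\mathcal{F}(\kappa)^3$ with $C\setminus\mu(A,B,C)$ finite, ordered componentwise; it is a bounded lattice with componentwise meet, join $(A,B,C)\vee(A',B',C')=(U_1\cup m,U_2\cup m,U_3\cup m)$ where $U_1=A\cup A'$, $U_2=B\cup B'$, $U_3=C\cup C'$, $m=\mu(U_1,U_2,U_3)$, least element $(\emptyset,\emptyset,\emptyset)$ and greatest element $(\kappa,\kappa,\kappa)$. A Banaschewski function on a bounded lattice $L$ is a map $f\colon L\to L$ such that $x\le y$ implies $f(x)\ge f(y)$, and $x\wedge f(x)=0_L$, $x\vee f(x)=1_L$ for all $x\in L$. *)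

(* subsets of an infinite type T (standing for the
   infinite cardinal kappa) are classical sets [set T]. *)
From mathcomp Require Import all_boot.
From mathcomp Require Import boolp classical_sets cardinality.
Set Implicit Arguments. Unset Strict Implicit. Unset Printing Implicit Defensive.
Local Open Scope classical_set_scope.

Section Defs.
Variable T : Type.

Definition finco (A : set T) : Prop := finite_set A \/ finite_set (~` A).

Definition simF (A C : set T) : Prop :=
  (finite_set A /\ finite_set C) \/ (finite_set (~` A) /\ finite_set (~` C)).

Definition mu (A B C : set T) : set T := (A `&` B) `|` (A `&` C) `|` (B `&` C).

Definition balanced (A B C : set T) : Prop :=
  A `&` B = A `&` C /\ A `&` C = B `&` C.

Definition triple := (set T * set T * set T)%type.

Definition t1 (x : triple) : set T := x.1.1.
Definition t2 (x : triple) : set T := x.1.2.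
Definition t3 (x : triple) : set T := x.2.

Definition inS (x : triple) : Prop :=
  [/\ finco (t1 x), finco (t2 x), finco (t3 x),
      balanced (t1 x) (t2 x) (t3 x)
    & finite_set (t3 x `\` mu (t1 x) (t2 x) (t3 x))].

Definition leS (x y : triple) : Prop :=
  [/\ t1 x `<=` t1 y, t2 x `<=` t2 y & t3 x `<=` t3 y].

Definition meetS (x y : triple) : triple :=
  (t1 x `&` t1 y, t2 x `&` t2 y, t3 x `&` t3 y).

Definition joinS (x y : triple) : triple :=
  let U1 := t1 x `|` t1 y in
  let U2 := t2 x `|` t2 y in
  let U3 := t3 x `|` t3 y in
  let m := mu U1 U2 U3 in
  (U1 `|` m, U2 `|` m, U3 `|` m).

Definition botS : triple := (set0, set0, set0).
Definition topS : triple := (setT, setT, setT).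

Definition banaschewskiS (f : triple -> triple) : Prop :=
  [/\ (forall x, inS x -> inS (f x)),
      (forall x y, inS x -> inS y -> leS x y -> leS (f y) (f x)),
      (forall x, inS x -> meetS x (f x) = botS)
    & (forall x, inS x -> joinS x (f x) = topS)].

Definition inB (x : triple) : Prop :=
  exists A C : set T, [/\ finco A, finco C, simF A C & x = (A, A `&` C, C)].

End Defs.

(* The triple e2 = (0, kappa, 0) lies in S, so a Banaschewski function f with
   range B would give a complement (A, A & C, C) of e2 with A ~ C.  Meeting with
   e2 forces A & C = 0 and joining with e2 forces A | C = kappa, so A and C would
   be two finite sets, or two cofinite sets, partitioning kappa: either way kappa
   would be finite. *)
From mathcomp Require Import all_boot.
From mathcomp Require Import boolp classical_sets cardinality.
Set Implicit Arguments. Unset Strict Implicit. Unset Printing Implicit Defensive.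
Local Open Scope classical_set_scope.

Section ComplementOfE2.
Variable T : Type.

Definition e2 : triple T := (set0, setT, set0).

Lemma inS_e2 : inS e2.
Proof.
split; rewrite /t1 /t2 /t3 /=.
- by left.
- by right; rewrite setCT.
- by left.
- by split; rewrite ?set0I ?setI0.
- by rewrite set0D.
Qed.

Lemma t2_meetS_e2 (y : triple T) : t2 (meetS e2 y) = t2 y.
Proof. by rewrite /meetS /t2 /= setTI. Qed.

Lemma t1_joinS_e2 (y : triple T) : t1 (joinS e2 y) = t1 y `|` t3 y.
Proof.
rewrite /joinS /mu /t1 /t2 /t3 /= !set0U setTU setIT setTI.
by apply/seteqP; split => t /=; rewrite /setU /setI /mkset; tauto.
Qed.

Lemma simF_partition_finite (A C : set T) :
  simF A C -> A `&` C = set0 -> A `|` C = setT -> finite_set [set: T].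
Proof.
move=> [[fA fC]|[fA fC]] AC0 ACT; first by rewrite -ACT finite_setU.
by rewrite -setC0 -AC0 setCI finite_setU.
Qed.

Lemma inB_not_complement_e2 (y : triple T) : infinite_set [set: T] ->
  inB y -> meetS e2 y = botS T -> joinS e2 y = topS T -> False.
Proof.
move=> infT [A [C [_ _ AC ->]]] meet0 joinT; apply/infT.
apply: (simF_partition_finite AC).
- by have := t2_meetS_e2 (A, A `&` C, C); rewrite meet0.
- by have := t1_joinS_e2 (A, A `&` C, C); rewrite joinT.
Qed.

End ComplementOfE2.

Theorem proposition5p7 (T : Type) (hT : infinite_set [set: T]) :
  ~ exists f : triple T -> triple T,
      banaschewskiS f /\
      (forall y, (exists2 x, inS x & f x = y) <-> inB y).
Proof.
move=> [f [[_ _ meetf joinf] rangef]].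
have e2S := inS_e2 T.
have fe2B : inB (f (e2 T)) by apply/rangef; exists (e2 T).
exact: inB_not_complement_e2 hT fe2B (meetf _ e2S) (joinf _ e2S).
Qed.
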